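(* Assume the action of $H$ on $F$ is open and transitive and that the backward orbits $S_Q^*q$ of $S_Q$ are open for all $q\in Q$. Let $\mathcal C\subset X$ be a control set of $S_X$ and $q\in\pi^{-1}(\mathcal C_0)$. Then for every control set $D\subset E$ of $S_E$ with $D_0\cap E_{\pi(q)}\neq\emptyset$ there is a control set $A^D_q\subset F$ of $S_q$ such that $$D_0\cap E_{\pi(q)}=q\cdot(A^D_q)_0.$$ Furthermore, the map $D\mapsto A^D_q$ is a bijection from the set of control sets $D$ of $S_E$ with $D_0\cap E_{\pi(q)}\neq\emptyset$ onto the set of control sets of $S_q$ on $F$, and it preserves the order: $D\le D'$ if and only if $A^D_q\le A^{D'}_q$.
   Context: Let $X$ be a topological space, $H$ a topological group, $\pi:Q\to X$ a locally trivial principal bundle with structure group $H$ acting on the right ($q\mapsto qa$), and $F$ a topological space with a continuous left $H$-action; the action is open if $Vv$ is open for all open $V\subset H$ and $v\in F$. $E=Q\times_HF$ is the associated bundle (classes $q\cdot v$ with $(qa)\cdot v=q\cdot(av)$), $\pi:E\to X$, and $E_x$ denotes the fiber over $x$. A local map on a space $Y$ is a continuous map $\phi:\mathrm{dom}\,\phi\to Y$ with open domain; a local semigroup is a family of local maps such that $\psi\circ\phi$ (on $\phi^{-1}(\mathrm{dom}\,\psi)$) belongs to it whenever this domain is nonempty. Orbits: $Sy=\{\phi(y):y\in\mathrm{dom}\,\phi,\phi\in S\}$, backward orbits $S^*y=\{z:\exists\phi\in S,\ \phi(z)=y\}$. A point $y$ is self-accessible if $y\in\mathrm{int}(S^*y)$;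 a control set is $D=\{z:z\in\mathrm{cl}(Sy),\ y\in\mathrm{cl}(Sz)\}$ for a self-accessible $y$; its transitivity set $D_0$ is the set of self-accessible points of $D$; $D\le D'$ iff $y'\in Sy$ for some $y\in D_0$, $y'\in D'_0$. A local endomorphism of $Q$ is a continuous $\phi$ with $\mathrm{dom}\,\phi=\pi^{-1}(V)$, $V\subset X$ open, and $\phi(qa)=\phi(q)a$. $S_Q$ is a local semigroup of local endomorphisms of $Q$; it induces local semigroups $S_X=\{\phi_X\}$ on $X$ with $\phi_X(\pi(q))=\pi(\phi(q))$ and $S_E=\{\phi_E\}$ on $E$ with $\phi_E(q\cdot v)=\phi(q)\cdot v$. For $q\in Q$, $S_q=\{a\in H: qa\in S_Qq\}$, a subsemigroup of $H$, acting on $F$. *)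

From mathcomp Require Import all_boot all_algebra.
From mathcomp Require Import all_classical all_reals all_analysis.
Set Implicit Arguments. Unset Strict Implicit. Unset Printing Implicit Defensive.
Local Open Scope classical_set_scope.

Definition is_topgroup (H : topologicalType) (mul : H -> H -> H) (inv : H -> H)
  (one : H) : Prop :=
  [/\ (forall a b c, mul a (mul b c) = mul (mul a b) c),
      (forall a, mul one a = a /\ mul a one = a),
      (forall a, mul (inv a) a = one /\ mul a (inv a) = one),
      continuous (fun p : H * H => mul p.1 p.2) & continuous inv].

Definition is_right_action (Q H : topologicalType) (mul : H -> H -> H) (one : H)
  (act : Q -> H -> Q) : Prop :=
  [/\ (forall q, act q one = q), (forall q a b, act (act q a) b = act q (mul a b))
    & continuous (fun p : Q * H => act p.1 p.2)].

Definition is_left_action (H F : topologicalType) (mul : H -> H -> H) (one : H)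
  (lact : H -> F -> F) : Prop :=
  [/\ (forall v, lact one v = v), (forall a b v, lact a (lact b v) = lact (mul a b) v)
    & continuous (fun p : H * F => lact p.1 p.2)].

Definition open_action (H F : topologicalType) (lact : H -> F -> F) : Prop :=
  forall (V : set H) (v : F), open V -> open ((fun a => lact a v) @` V).

Definition transitive_action (H F : Type) (lact : H -> F -> F) : Prop :=
  forall v w : F, exists a, lact a v = w.

(* Local triviality: over an open U ∋ x there is an H-equivariant
   homeomorphism pi^-1(U) ≅ U × H, q |-> (pi q, g q), with inverse (y,a) |-> s y a. *)
Definition is_principal_bundle (X Q H : topologicalType) (mul : H -> H -> H)
  (one : H) (act : Q -> H -> Q) (pi : Q -> X) : Prop :=
  [/\ is_right_action mul one act, continuous pi,
      (forall q a, pi (act q a) = pi q) &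
      forall x : X, exists U : set X, [/\ open U, U x &
        exists (g : Q -> H) (s : X -> H -> Q),
        [/\ (forall q, U (pi q) -> s (pi q) (g q) = q),
            (forall y a, U y -> pi (s y a) = y /\ g (s y a) = a),
            {within pi @^-1` U, continuous g},
            {within U `*` setT, continuous (fun p : X * H => s p.1 p.2)} &
            (forall q a, U (pi q) -> g (act q a) = mul (g q) a)]]].

(* E is given together with the class map (q,v) |-> q·v; it is the quotient of
   Q × F by (qa, v) ~ (q, av): the class map is onto, identifies exactly these
   pairs, and E carries the quotient topology. *)
Definition is_associated_bundle (Q H F E : topologicalType) (act : Q -> H -> Q)
  (lact : H -> F -> F) (dot : Q -> F -> E) : Prop :=
  [/\ (forall e : E, exists q v, dot q v = e),
      (forall q v q' v', dot q v = dot q' v' <->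
                         exists a, q = act q' a /\ v' = lact a v) &
      (forall U : set E, open U <-> open ((fun p : Q * F => dot p.1 p.2) @^-1` U))].

Definition assoc_fiber (X Q F E : Type) (pi : Q -> X) (dot : Q -> F -> E) (x : X)
  : set E := [set e | exists q v, pi q = x /\ e = dot q v].

(* a local map: a domain and a map (only its values on the domain matter) *)
Record localmap (Y : Type) := LocalMap { lm_dom : set Y; lm_fun :> Y -> Y }.

Definition is_localmap (Y : topologicalType) (phi : localmap Y) : Prop :=
  open (lm_dom phi) /\ {within lm_dom phi, continuous (lm_fun phi)}.

Definition lm_comp (Y : Type) (psi phi : localmap Y) : localmap Y :=
  LocalMap (lm_dom phi `&` (lm_fun phi) @^-1` lm_dom psi) (lm_fun psi \o lm_fun phi).

Definition lm_eq (Y : Type) (phi psi : localmap Y) : Prop :=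
  lm_dom phi = lm_dom psi /\ forall y, lm_dom phi y -> phi y = psi y.

Definition is_local_semigroup (Y : topologicalType) (S : set (localmap Y)) : Prop :=
  (forall phi, S phi -> is_localmap phi) /\
  forall phi psi, S phi -> S psi -> lm_dom (lm_comp psi phi) !=set0 ->
    exists chi, S chi /\ lm_eq chi (lm_comp psi phi).

Definition is_local_endo (X Q H : topologicalType) (act : Q -> H -> Q) (pi : Q -> X)
  (phi : localmap Q) : Prop :=
  [/\ is_localmap phi,
      (exists V : set X, open V /\ lm_dom phi = pi @^-1` V) &
      (forall q a, lm_dom phi q -> phi (act q a) = act (phi q) a)].

(* orbit of a local semigroup:  ls_orbit S y z  <->  z ∈ S y *)
Definition ls_orbit (Y : Type) (S : set (localmap Y)) (y z : Y) : Prop :=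
  exists phi, S phi /\ lm_dom phi y /\ phi y = z.

Definition induced_SX (X Q : Type) (pi : Q -> X) (SQ : set (localmap Q))
  : set (localmap X) :=
  [set psi | exists phi, SQ phi /\ lm_dom psi = pi @` lm_dom phi /\
             forall q, lm_dom phi q -> psi (pi q) = pi (phi q)].

Definition induced_SE (Q F E : Type) (dot : Q -> F -> E) (SQ : set (localmap Q))
  : set (localmap E) :=
  [set psi | exists phi, SQ phi /\
     lm_dom psi = [set e | exists q v, lm_dom phi q /\ e = dot q v] /\
     forall q v, lm_dom phi q -> psi (dot q v) = dot (phi q) v].

Definition Sq (Q H : Type) (act : Q -> H -> Q) (SQ : set (localmap Q)) (q : Q)
  : set H := [set a | ls_orbit SQ q (act q a)].

Definition sg_orbit (H F : Type) (lact : H -> F -> F) (T : set H) (v w : F) : Prop :=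
  exists a, T a /\ lact a v = w.

Section ControlSets.
Context (Y : topologicalType) (O : Y -> Y -> Prop).

Definition orbit (y : Y) : set Y := [set z | O y z].
Definition backorbit (y : Y) : set Y := [set z | O z y].
Definition self_accessible (y : Y) : Prop := (backorbit y)° y.

Definition control_set_of (y : Y) : set Y :=
  [set z | closure (orbit y) z /\ closure (orbit z) y].

Definition is_control_set (D : set Y) : Prop :=
  exists y, self_accessible y /\ D = control_set_of y.

Definition transitivity_set (D : set Y) : set Y :=
  [set z | D z /\ self_accessible z].

Definition cs_le (D D' : set Y) : Prop :=
  exists y y', transitivity_set D y /\ transitivity_set D' y' /\ O y y'.
End ControlSets.

From Pilot Require Import Defs.
From mathcomp Require Import all_boot all_algebra.
From mathcomp Require Import all_classical all_reals all_analysis.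
Set Implicit Arguments. Unset Strict Implicit.
Local Open Scope classical_set_scope.

(* The fiber E_{pi q} is exactly the image of j := (v |-> q.v), and j is an
   "orbit embedding": q.v reaches q.w under S_E iff v reaches w under S_q, and
   q.v is self-accessible for S_E iff v is self-accessible for S_q.  The first
   fact is the equivariance of S_Q; the second uses continuity of j in one
   direction and, in the other, the openness of the backward orbits S_Q^* q
   together with the openness of the quotient map Q x F -> E. *)

Lemma continuous_pair (A B C : topologicalType) (f : A -> B) (g : A -> C) :
  continuous f -> continuous g -> continuous (fun x => (f x, g x)).
Proof. by move=> cf cg x; apply: cvg_pair; [exact: cf | exact: cg]. Qed.

Lemma continuous_compose (A B C : topologicalType) (f : A -> B) (g : B -> C) :
  continuous f -> continuous g -> continuous (g \o f).
Proof. by move=> cf cg x; apply: continuous_comp; [exact: cf | exact: cg]. Qed.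

Lemma continuous_fix_fst (A B C : topologicalType) (f : A * B -> C) (a : A) :
  continuous f -> continuous (fun b => f (a, b)).
Proof.
apply: (@continuous_compose _ _ _ (fun b => (a, b))).
by apply: continuous_pair => x; [exact: cvg_cst | exact: cvg_id].
Qed.

Section ControlSets.
Variables (Y : topologicalType) (O : Y -> Y -> Prop).
Hypothesis O_trans : forall a b c, O a b -> O b c -> O a c.

Lemma self_accessible_orbit y : self_accessible O y -> O y y.
Proof. by move=> /interior_subset. Qed.

Lemma closure_orbit_self_accessible y z :
  self_accessible O y -> closure (Defs.orbit O z) y -> O z y.
Proof. by move=> sy /(_ _ sy) [w [Ozw Owy]]; exact: O_trans Ozw Owy. Qed.

Lemma control_setE y z : self_accessible O y -> self_accessible O z ->
  control_set_of O y z <-> O y z /\ O z y.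
Proof.
move=> sy sz; split.
  by move=> [yz zy]; split; apply: closure_orbit_self_accessible.
by move=> [yz zy]; split; apply: subset_closure.
Qed.

Lemma control_set_self y : self_accessible O y -> control_set_of O y y.
Proof. by move=> sy; apply/(control_setE sy sy); split; exact: self_accessible_orbit. Qed.

Lemma control_set_of_eq y z : self_accessible O y -> self_accessible O z ->
  control_set_of O y z -> control_set_of O y = control_set_of O z.
Proof.
have sub y' z' : self_accessible O y' -> self_accessible O z' ->
    O y' z' -> O z' y' -> control_set_of O y' `<=` control_set_of O z'.
  move=> sy' sz' yz zy w [yw wy]; split.
    by apply: (closureS _ yw) => u /= yu; exact: O_trans zy yu.
  apply: subset_closure => /=; apply: O_trans _ yz.
  exact: closure_orbit_self_accessible.
move=> sy sz /(control_setE sy sz) [yz zy].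
by apply/seteqP; split; exact: sub.
Qed.

Lemma control_set_trans D z : is_control_set O D -> transitivity_set O D z ->
  D = control_set_of O z.
Proof. by case=> y [sy ->] [Dz sz]; exact: control_set_of_eq. Qed.

Lemma control_set_ofP y : self_accessible O y ->
  is_control_set O (control_set_of O y) /\
  transitivity_set O (control_set_of O y) y.
Proof. by move=> sy; split; [exists y | split => //; exact: control_set_self]. Qed.

Lemma transitivity_set_mutual D y z : is_control_set O D ->
  transitivity_set O D y -> transitivity_set O D z -> O y z /\ O z y.
Proof.
move=> cD Dy Dz; apply/(control_setE Dy.2 Dz.2).
by rewrite -(control_set_trans cD Dy); exact: Dz.1.
Qed.

Lemma cs_leP D D' y y' : is_control_set O D -> is_control_set O D' ->
  transitivity_set O D y -> transitivity_set O D' y' -> cs_le O D D' <-> O y y'.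
Proof.
move=> cD cD' Dy Dy'; split => [[z [z' [Dz [Dz' zz']]]]|yy']; last by exists y, y'.
have [yz _] := transitivity_set_mutual cD Dy Dz.
have [z'y' _] := transitivity_set_mutual cD' Dz' Dy'.
exact: O_trans (O_trans yz zz') z'y'.
Qed.

End ControlSets.

(* Transfer of control sets along an orbit embedding j : Y -> Z. *)
Section ControlSetTransfer.
Variables (Y Z : topologicalType) (OY : Y -> Y -> Prop) (OZ : Z -> Z -> Prop).
Variable j : Y -> Z.
Hypothesis OY_trans : forall a b c, OY a b -> OY b c -> OY a c.
Hypothesis OZ_trans : forall a b c, OZ a b -> OZ b c -> OZ a c.
Hypothesis j_orbit : forall v w, OZ (j v) (j w) <-> OY v w.
Hypothesis j_self_accessible : forall v, self_accessible OZ (j v) <-> self_accessible OY v.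

Definition meets_image (D : set Z) : Prop :=
  is_control_set OZ D /\ transitivity_set OZ D `&` range j !=set0.

Definition transfer (D : set Z) : set Y :=
  [set w | exists v, transitivity_set OZ D (j v) /\ control_set_of OY v w].

Lemma meets_imageP D : transitivity_set OZ D `&` range j !=set0 ->
  exists v, transitivity_set OZ D (j v).
Proof. by move=> [z [Dz [v _ jvz]]]; exists v; rewrite jvz. Qed.

Lemma control_set_j v w : self_accessible OY v -> self_accessible OY w ->
  control_set_of OZ (j v) (j w) <-> control_set_of OY v w.
Proof.
move=> sv sw.
have sjv := (j_self_accessible v).2 sv; have sjw := (j_self_accessible w).2 sw.
split => [/(control_setE OZ_trans sjv sjw)|/(control_setE OY_trans sv sw)] [vw wv].
  by apply/(control_setE OY_trans sv sw); split; apply/j_orbit.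
by apply/(control_setE OZ_trans sjv sjw); split; apply/j_orbit.
Qed.

Lemma transferE D v : is_control_set OZ D -> transitivity_set OZ D (j v) ->
  transfer D = control_set_of OY v.
Proof.
move=> cD Dv; have sv := (j_self_accessible v).1 Dv.2.
apply/seteqP; split => [w [v' [Dv' v'w]]|w vw]; last by exists v.
have sv' := (j_self_accessible v').1 Dv'.2.
rewrite (control_set_trans OZ_trans cD Dv) in Dv'.
by rewrite (control_set_of_eq OY_trans sv sv') //; apply/control_set_j; case: Dv'.
Qed.

Lemma transitivity_set_image D v : is_control_set OZ D ->
  transitivity_set OZ D (j v) ->
  transitivity_set OZ D `&` range j
    = j @` transitivity_set OY (control_set_of OY v).
Proof.
move=> cD Dv; have sv := (j_self_accessible v).1 Dv.2.
rewrite (control_set_trans OZ_trans cD Dv).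
apply/seteqP; split => [e [[De se] [w _ jwe]]|_ [w [vw sw] <-]].
  subst e; have sw' := (j_self_accessible w).1 se.
  by exists w => //; split => //; apply/control_set_j.
have sw' := (j_self_accessible w).2 sw.
by split; [split => //; apply/control_set_j | exists w].
Qed.

Lemma transfer_control_set D : meets_image D ->
  is_control_set OY (transfer D) /\
  transitivity_set OZ D `&` range j = j @` transitivity_set OY (transfer D).
Proof.
move=> [cD /meets_imageP [v Dv]].
rewrite (transferE cD Dv) (transitivity_set_image cD Dv); split => //.
by have [] := control_set_ofP OY_trans ((j_self_accessible v).1 Dv.2).
Qed.

Lemma transfer_inj D D' : meets_image D -> meets_image D' ->
  transfer D = transfer D' -> D = D'.
Proof.
move=> [cD /meets_imageP [v Dv]] [cD' /meets_imageP [v' Dv']].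
have sv := (j_self_accessible v).1 Dv.2; have sv' := (j_self_accessible v').1 Dv'.2.
rewrite (transferE cD Dv) (transferE cD' Dv') => eq_cs.
rewrite (control_set_trans OZ_trans cD Dv) (control_set_trans OZ_trans cD' Dv').
apply: (control_set_of_eq OZ_trans); [exact: Dv.2 | exact: Dv'.2 |].
by apply/control_set_j => //; rewrite eq_cs; exact: control_set_self.
Qed.

Lemma transfer_surj B : is_control_set OY B ->
  exists D, meets_image D /\ transfer D = B.
Proof.
move=> [v [sv ->]].
have [cD Dv] := control_set_ofP OZ_trans ((j_self_accessible v).2 sv).
exists (control_set_of OZ (j v)); split; last exact: transferE.
by split => //; exists (j v); split => //; exists v.
Qed.

Lemma transfer_le D D' : meets_image D -> meets_image D' ->
  cs_le OZ D D' <-> cs_le OY (transfer D) (transfer D').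
Proof.
move=> [cD /meets_imageP [v Dv]] [cD' /meets_imageP [v' Dv']].
have [cB Bv] := control_set_ofP OY_trans ((j_self_accessible v).1 Dv.2).
have [cB' Bv'] := control_set_ofP OY_trans ((j_self_accessible v').1 Dv'.2).
rewrite (transferE cD Dv) (transferE cD' Dv').
split => [/(cs_leP OZ_trans cD cD' Dv Dv') /j_orbit vv'|].
  exact/(cs_leP OY_trans cB cB' Bv Bv').
move=> /(cs_leP OY_trans cB cB' Bv Bv') /j_orbit vv'.
exact/(cs_leP OZ_trans cD cD' Dv Dv').
Qed.

End ControlSetTransfer.

(* The associated bundle E = Q x_H F and the semigroups induced by S_Q. *)
Section AssociatedBundle.
Variables (X Q H F E : topologicalType).
Variables (mul : H -> H -> H) (inv : H -> H) (one : H).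
Variables (act : Q -> H -> Q) (pi : Q -> X) (lact : H -> F -> F) (dot : Q -> F -> E).
Variable SQ : set (localmap Q).
Hypothesis group : is_topgroup mul inv one.
Hypothesis bundle : is_principal_bundle mul one act pi.
Hypothesis left_action : is_left_action mul one lact.
Hypothesis associated : is_associated_bundle act lact dot.
Hypothesis SQ_semigroup : is_local_semigroup SQ.
Hypothesis SQ_endo : forall phi, SQ phi -> is_local_endo act pi phi.

Let OQ := ls_orbit SQ.
Let OE := ls_orbit (induced_SE dot SQ).

Lemma mulA a b c : mul a (mul b c) = mul (mul a b) c.
Proof. by case: group. Qed.
Lemma mul1g a : mul one a = a.
Proof. by case: group => _ /(_ a) []. Qed.
Lemma mulVg a : mul (inv a) a = one.
Proof. by case: group => _ _ /(_ a) []. Qed.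
Lemma mulgV a : mul a (inv a) = one.
Proof. by case: group => _ _ /(_ a) []. Qed.

Lemma act1 x : act x one = x.
Proof. by case: bundle => -[]. Qed.
Lemma actM x a b : act (act x a) b = act x (mul a b).
Proof. by case: bundle => -[]. Qed.
Lemma act_continuous : continuous (fun p : Q * H => act p.1 p.2).
Proof. by case: bundle => -[]. Qed.
Lemma pi_act x a : pi (act x a) = pi x.
Proof. by case: bundle. Qed.
Lemma lact1 v : lact one v = v.
Proof. by case: left_action. Qed.
Lemma lactM a b v : lact a (lact b v) = lact (mul a b) v.
Proof. by case: left_action. Qed.
Lemma lact_continuous : continuous (fun p : H * F => lact p.1 p.2).
Proof. by case: left_action. Qed.
Lemma dot_eq x v x' v' :
  dot x v = dot x' v' <-> exists a, x = act x' a /\ v' = lact a v.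
Proof. by case: associated. Qed.
Lemma dot_openP (U : set E) :
  open U <-> open ((fun p : Q * F => dot p.1 p.2) @^-1` U).
Proof. by case: associated. Qed.

Lemma dot_act x a v : dot (act x a) v = dot x (lact a v).
Proof. by apply/dot_eq; exists a. Qed.

Lemma fiber_act x y : pi x = pi y -> exists c, x = act y c.
Proof.
move=> pxy; case: bundle => _ _ _ /(_ (pi y)) [U [_ Uy [g [s [gsK _ _ _ g_act]]]]].
set c := mul (inv (g y)) (g x); exists c.
have Ux : U (pi x) by rewrite pxy.
have Uyc : U (pi (act y c)) by rewrite pi_act.
have g_yc : g (act y c) = g x by rewrite g_act // /c mulA mulgV mul1g.
by rewrite -(gsK _ Ux) -(gsK _ Uyc) g_yc pi_act pxy.
Qed.

Lemma assoc_fiber_range q : assoc_fiber pi dot (pi q) = range (dot q).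
Proof.
apply/seteqP; split => [_ [x [v [pxq ->]]]|_ [v _ <-]]; last by exists q, v.
have [c ->] := fiber_act pxq.
by exists (lact c v); rewrite // -dot_act.
Qed.

Lemma dom_saturated phi x y : SQ phi -> lm_dom phi x -> pi y = pi x ->
  lm_dom phi y.
Proof. by move=> /SQ_endo [_ [V [_ ->]] _] /= Vx pyx; rewrite /preimage /= pyx. Qed.

Lemma endo_act phi x a : SQ phi -> lm_dom phi x -> phi (act x a) = act (phi x) a.
Proof. by move=> /SQ_endo [_ _ h] /h. Qed.

Lemma OQ_trans x y z : OQ x y -> OQ y z -> OQ x z.
Proof.
move=> [phi [Sphi [dx <-]]] [psi [Spsi [dy <-]]].
have [chi [Schi [dom_chi chiE]]] :=
  SQ_semigroup.2 phi psi Sphi Spsi (ex_intro _ x (conj dx dy)).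
have dcomp : lm_dom (lm_comp psi phi) x by [].
by exists chi; split => //; rewrite dom_chi chiE ?dom_chi.
Qed.

Lemma OQ_act x y a : OQ x y -> OQ (act x a) (act y a).
Proof.
move=> [phi [Sphi [dx <-]]]; exists phi; split => //; split.
  by apply: (dom_saturated Sphi dx); rewrite pi_act.
exact: endo_act.
Qed.

(* phi(q).v depends only on the class q.v, so phi_E is well defined. *)
Lemma dot_endo_wd phi x v x' v' : SQ phi -> lm_dom phi x ->
  dot x v = dot x' v' -> dot (phi x) v = dot (phi x') v'.
Proof.
move=> Sphi dx /dot_eq [a [x_eq ->]]; subst x.
have dx' : lm_dom phi x' by apply: (dom_saturated Sphi dx); rewrite pi_act.
by rewrite endo_act // dot_act.
Qed.

Definition lift_E (phi : localmap Q) : localmap E :=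
  LocalMap [set e | exists x v, lm_dom phi x /\ e = dot x v]
    (fun e => match pselect (exists p : Q * F, lm_dom phi p.1 /\ e = dot p.1 p.2) with
      | left h => let p := projT1 (cid h) in dot (phi p.1) p.2
      | right _ => e end).

Lemma lift_E_dot phi x v : SQ phi -> lm_dom phi x ->
  lift_E phi (dot x v) = dot (phi x) v.
Proof.
move=> Sphi dx /=; case: pselect => [h|[]]; last by exists (x, v).
by case: (cid h) => p [dp ep] /=; apply: dot_endo_wd.
Qed.

Lemma lift_E_induced phi : SQ phi -> induced_SE dot SQ (lift_E phi).
Proof. by move=> Sphi; exists phi; split => //; split => // x v; exact: lift_E_dot. Qed.

Lemma OE_dot x y w : OQ x y -> OE (dot x w) (dot y w).
Proof.
move=> [phi [Sphi [dx <-]]]; exists (lift_E phi); split; first exact: lift_E_induced.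
by split; [exists x, w | exact: lift_E_dot].
Qed.

Lemma OE_dotV x w e : OE (dot x w) e -> exists2 y, OQ x y & e = dot y w.
Proof.
move=> [psi [[phi [Sphi [dom_psi psiE]]] [+ <-]]].
rewrite dom_psi => -[x0 [v0 [dx0 /dot_eq [a [x_eq _]]]]].
have dx : lm_dom phi x by apply: (dom_saturated Sphi dx0); rewrite x_eq pi_act.
by exists (phi x); [exists phi | rewrite psiE].
Qed.

Lemma OE_trans e1 e2 e3 : OE e1 e2 -> OE e2 e3 -> OE e1 e3.
Proof.
case: associated => /(_ e1) [x [w <-]] _ _.
move=> /OE_dotV [y xy ->] /OE_dotV [z yz ->].
by apply: OE_dot; exact: OQ_trans xy yz.
Qed.

Lemma dot_continuous : continuous (fun p : Q * F => dot p.1 p.2).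
Proof. by apply/continuousP => U /dot_openP. Qed.

Lemma dot_open_map (O : set (Q * F)) :
  open O -> open [set dot p.1 p.2 | p in O].
Proof.
move=> oO; apply/dot_openP.
have -> : (fun p : Q * F => dot p.1 p.2) @^-1` [set dot p.1 p.2 | p in O] =
    \bigcup_(a in setT)
      ((fun p : Q * F => (act p.1 a, lact (inv a) p.2)) @^-1` O).
  apply/seteqP; split => [[x w] [[x' w'] Op' /dot_eq [a [x'E wE]]]|p [a _ Op]].
    by exists a => //=; rewrite /= in x'E wE; rewrite wE lactM mulVg lact1 -x'E.
  by exists (act p.1 a, lact (inv a) p.2) => //=; rewrite dot_act lactM mulgV lact1.
apply: bigcup_open => a _; apply: (proj1 (continuousP _)) oO.
have act_a : continuous ((fun p : Q * H => act p.1 p.2) \o (fun p : Q * F => (p.1, a))).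
  apply: continuous_compose act_continuous.
  by apply: continuous_pair => p; [exact: cvg_fst | exact: cvg_cst].
have lact_a : continuous ((fun p : H * F => lact p.1 p.2) \o (fun p : Q * F => (inv a, p.2))).
  apply: continuous_compose lact_continuous.
  by apply: continuous_pair => p; [exact: cvg_cst | exact: cvg_snd].
exact: continuous_pair act_a lact_a.
Qed.

(* Fix the base point q; only the backward orbit of q needs to be open. *)
Section Basepoint.
Variable q : Q.
Hypothesis back_open : open (backorbit OQ q).

Let OF := sg_orbit lact (Sq act SQ q).

Lemma OF_trans u v w : OF u v -> OF v w -> OF u w.
Proof.
move=> [a [Sa <-]] [b [Sb <-]]; exists (mul b a); split; last by rewrite lactM.
by apply: OQ_trans Sa _; rewrite /= -actM; exact: OQ_act.
Qed.

Lemma dotq_orbit v w : OE (dot q v) (dot q w) <-> OF v w.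
Proof.
split => [/OE_dotV [y qy /esym /dot_eq [a [yE ->]]]|[a [Sa <-]]].
  by subst y; exists a.
by rewrite -dot_act; exact: OE_dot.
Qed.

Lemma dotq_continuous : continuous (dot q).
Proof. exact: (@continuous_fix_fst Q F E _ q dot_continuous). Qed.

(* Self-accessibility of q.v for S_E is that of v for S_q.  Backward: a
   neighbourhood of q.v inside its S_E-backward orbit is the image of
   S_Q^* q x int(S_q^* v) under the open quotient map. *)
Lemma dotq_self_accessible v :
  self_accessible OE (dot q v) <-> self_accessible OF v.
Proof.
split => [sv|sv].
  have nbhs_pre : nbhs v (dot q @^-1` backorbit OE (dot q v)) := dotq_continuous sv.
  by apply: filterS nbhs_pre => w /dotq_orbit.
set N := [set dot p.1 p.2 | p in backorbit OQ q `*` (backorbit OF v)°].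
have oN : open N.
  apply: dot_open_map; apply: openI; apply: (proj1 (continuousP _)).
  - by move=> p; exact: cvg_fst.
  - exact: back_open.
  - by move=> p; exact: cvg_snd.
  - exact: open_interior.
have Nqv : N (dot q v).
  have [a [Sa av]] := self_accessible_orbit sv.
  exists (act q (inv a), lact a v); first split => /=.
  - by have := OQ_act (inv a) Sa; rewrite actM mulgV act1.
  - by rewrite av; exact: sv.
  by rewrite /= dot_act lactM mulVg lact1.
rewrite /self_accessible /interior; apply: filterS (open_nbhs_nbhs (conj oN Nqv)).
move=> _ [[x w] [xq wv] <-] /=; apply: OE_trans (OE_dot w xq) _.
by apply/dotq_orbit; exact: interior_subset wv.
Qed.

End Basepoint.
End AssociatedBundle.

Theorem mainTheorem12
  (X Q H F E : topologicalType)
  (mul : H -> H -> H) (inv : H -> H) (one : H)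
  (act : Q -> H -> Q) (pi : Q -> X) (lact : H -> F -> F) (dot : Q -> F -> E)
  (SQ : set (localmap Q))
  (HG : is_topgroup mul inv one)
  (HP : is_principal_bundle mul one act pi)
  (HF : is_left_action mul one lact)
  (HE : is_associated_bundle act lact dot)
  (HSQ : is_local_semigroup SQ)
  (HSQendo : forall phi, SQ phi -> is_local_endo act pi phi)
  (Hopen : open_action lact) (Htrans : transitive_action lact)
  (Hback : forall q : Q, open (backorbit (ls_orbit SQ) q))
  (C : set X) (HC : is_control_set (ls_orbit (induced_SX pi SQ)) C)
  (q : Q) (Hq : transitivity_set (ls_orbit (induced_SX pi SQ)) C (pi q)) :
  let OE := ls_orbit (induced_SE dot SQ) in
  let OF := sg_orbit lact (Sq act SQ q) in
  let good (D : set E) := is_control_set OE D /\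
        transitivity_set OE D `&` assoc_fiber pi dot (pi q) !=set0 in
  exists A : set E -> set F,
    [/\ (forall D, good D ->
           is_control_set OF (A D) /\
           transitivity_set OE D `&` assoc_fiber pi dot (pi q)
             = dot q @` transitivity_set OF (A D)),
        (forall D D', good D -> good D' -> A D = A D' -> D = D'),
        (forall B, is_control_set OF B -> exists D, good D /\ A D = B) &
        (forall D D', good D -> good D' -> (cs_le OE D D' <-> cs_le OF (A D) (A D')))].
Proof.
move=> OE OF good.
rewrite /good (assoc_fiber_range HG HP HE q).
have OE_tr := OE_trans HP HE HSQ HSQendo.
have OF_tr := OF_trans HP HF HSQ HSQendo (q := q).
have j_orbit := dotq_orbit HP HE HSQendo q.
have j_sa := dotq_self_accessible HG HP HF HE HSQ HSQendo (Hback q).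
exists (transfer OF OE (dot q)); split.
- exact: transfer_control_set.
- exact: transfer_inj.
- exact: transfer_surj.
- exact: transfer_le.
Qed.
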